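(* Consider an instance of the Unknown Value Probing (UVP) problem (defined in the context) with finite configuration set $\mathcal{X}\subset\mathbb{R}^d$, maximum per-configuration budget $T\in\mathbb{N}$, total budget $B$, and unknown value function $A$ satisfying the monotonicity and smoothness assumptions with parameter $\epsilon>0$. Let $k=\lfloor B/T\rfloor$ and let $r_k^\star$ be the optimal $k$-center radius of $\mathcal{X}$. Then the algorithm FullCent achieves a $(1-2\epsilon r_k^\star)$-approximation for the UVP problem: the configuration $\hat{\mathbf{x}}$ it returns satisfies $A(\hat{\mathbf{x}},T)\ge (1-2\epsilon r_k^\star)\,A(\mathbf{x}^\star,T)$, where $\mathbf{x}^\star\in\arg\max_{\mathbf{x}\in\mathcal{X}}A(\mathbf{x},T)$.
   Context: UVP problem: $A:\mathbb{R}^d\times[T]\to[0,1]$ is an unknown function ($[T]=\{1,\dots,T\}$); $\mathcal{X}=\{\mathbf{x}_1,\dots,\mathbf{x}_n\}\subset\mathbb{R}^d$ is known. The goal is $\max_{b_1,\dots,b_n}\max_{i}A(\mathbf{x}_i,b_i)$ subject to $\sum_i b_i\le B$, $b_i\in[T]$. Values are revealed only by evaluation; obtaining $A(\mathbf{x},b)$ requires evaluating $A(\mathbf{x},1),\dots,A(\mathbf{x},b)$ sequentially, costing $b$ units of budget. Assumption 1 (monotonicity): for every $\mathbf{x}$, $b_1\le b_2\Rightarrow A(\mathbf{x},b_1)\le A(\mathbf{x},b_2)$. Assumption 2 (smoothness): for all $\mathbf{x}_i,\mathbf{x}_j\in\mathcal{X}$, $\min_{b\in[T]} A(\mathbf{x}_i,b)/A(\mathbf{x}_j,b)\ge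 1-\epsilon\|\mathbf{x}_i-\mathbf{x}_j\|_2$, with the conventions that the ratio is $1$ if both values are $0$ and $+\infty$ if $A(\mathbf{x}_j,b)=0<A(\mathbf{x}_i,b)$. The optimal $k$-center radius is $r_k^\star=\min_{\mathcal{C}\subseteq\mathcal{X},|\mathcal{C}|=k}\max_{\mathbf{x}\in\mathcal{X}}\min_{\mathbf{c}\in\mathcal{C}}\|\mathbf{x}-\mathbf{c}\|_2$. Greedy $k$-center $\textsc{KCenter}(k,\mathcal{C},\mathcal{X})$: starting from $\mathcal{C}^{(0)}=\mathcal{C}$, for $i=1,\dots,k$ choose $\mathbf{c}_i\in\arg\max_{\mathbf{x}\in\mathcal{X}\setminus\mathcal{C}^{(i-1)}}\min_{\mathbf{c}\in\mathcal{C}^{(i-1)}}\|\mathbf{x}-\mathbf{c}\|_2$ (a minimum over the empty set is $+\infty$, ties broken arbitrarily), set $\mathcal{C}^{(i)}=\mathcal{C}^{(i-1)}\cup\{\mathbf{c}_i\}$, and return the new centers $\{\mathbf{c}_1,\dots,\mathbf{c}_k\}$. FullCent$(B,T,\mathcal{X})$: set $k=\lfloor B/T\rfloor$, compute $\mathcal{C}=\textsc{KCenter}(k,\emptyset,\mathcal{X})$, evaluate each $\mathbf{c}\in\mathcal{C}$ at budgets $1,\dots,T$, and return $\arg\max_{\mathbf{c}\in\mathcal{C}}A(\mathbf{c},T)$. *)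

From HB Require Import structures.
From mathcomp Require Import all_boot all_order all_algebra.
From mathcomp Require Import reals constructive_ereal.
Set Implicit Arguments. Unset Strict Implicit. Unset Printing Implicit Defensive.
Import Order.TTheory GRing.Theory Num.Theory.
Local Open Scope ring_scope.
Local Open Scope ereal_scope.

Section UVP.
Variable R : realType.

Definition edist (d : nat) (v w : 'rV[R]_d) : R :=
  Num.sqrt (\sum_(l < d) (v ord0 l - w ord0 l) ^+ 2).

(* A(x_i,b)/A(x_j,b) with the paper's conventions: 1 if both are 0,
   +oo if the denominator is 0 and the numerator is positive. *)
Definition uvp_ratio (a c : R) : \bar R :=
  if c == 0%R then (if a == 0%R then 1%E else +oo) else (a / c)%:E.

Definition monotone_A (d T : nat) (A : 'rV[R]_d -> nat -> R) : Prop :=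
  forall (v : 'rV[R]_d) (b1 b2 : nat),
    (1 <= b1)%N -> (b1 <= b2)%N -> (b2 <= T)%N -> (A v b1 <= A v b2)%R.

Definition smooth_A (d n : nat) (x : 'I_n -> 'rV[R]_d) (T : nat)
    (A : 'rV[R]_d -> nat -> R) (eps : R) : Prop :=
  forall i j : 'I_n,
    \big[mine/+oo]_(b < T) uvp_ratio (A (x i) b.+1) (A (x j) b.+1)
      >= (1 - eps * edist (x i) (x j))%:E.

(* distance from point y to a set of centers C (min over empty set = +oo) *)
Definition dist_to (d n : nat) (x : 'I_n -> 'rV[R]_d) (C : seq 'I_n) (y : 'I_n)
  : \bar R := \big[mine/+oo]_(c <- C) (edist (x y) (x c))%:E.

Definition kradius (d n : nat) (x : 'I_n -> 'rV[R]_d) (C : {set 'I_n}) : \bar R :=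
  \big[maxe/0%E]_(i < n) dist_to x (enum C) i.

(* optimal k-center radius r_k^* (as an extended real; finite when 1 <= k <= n) *)
Definition opt_kradius (d n : nat) (x : 'I_n -> 'rV[R]_d) (k : nat) : \bar R :=
  \big[mine/+oo]_(C : {set 'I_n} | #|C| == k) kradius x C.

(* greedy_ok x C cs : the sequence cs of new centers is a possible execution
   (for some tie-breaking) of the greedy k-center procedure started at C. *)
Fixpoint greedy_ok (d n : nat) (x : 'I_n -> 'rV[R]_d) (C : seq 'I_n)
    (cs : seq 'I_n) : Prop :=
  match cs with
  | [::] => True
  | c :: cs' =>
      c \notin C /\
      (forall y : 'I_n, y \notin C -> dist_to x C y <= dist_to x C c) /\
      greedy_ok x (c :: C) cs'
  end.

Definition kcenter_run (d n : nat) (x : 'I_n -> 'rV[R]_d) (k : nat)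
    (C : seq 'I_n) (cs : seq 'I_n) : Prop :=
  size cs = k /\ greedy_ok x C cs.

Definition fullcent_output (d n : nat) (x : 'I_n -> 'rV[R]_d)
    (A : 'rV[R]_d -> nat -> R) (B T : nat) (h : 'I_n) : Prop :=
  exists cs : seq 'I_n,
    kcenter_run x (B %/ T) [::] cs /\ h \in cs /\
    (forall c, c \in cs -> (A (x c) T <= A (x h) T)%R).

End UVP.

From HB Require Import structures.
From mathcomp Require Import all_boot all_order all_algebra.
From mathcomp Require Import reals constructive_ereal.
From mathcomp Require Import ring lra.
Import Order.TTheory GRing.Theory Num.Theory.
Set Implicit Arguments.
Unset Strict Implicit.
Unset Printing Implicit Defensive.
Local Open Scope ring_scope.

(* Greedy farthest-point traversal is a 2-approximation of k-center: if a
   point y were farther than 2r from the k greedy centers, where r is the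
   radius of an optimal k-center set C, then y and the centers would be k + 1
   points pairwise more than 2r apart (each center was a farthest point when
   it was chosen), so two of them would share their nearest point of C.
   Hence x* lies within 2r of some center c; smoothness at budget T gives
   A(c, T) >= (1 - 2 eps r) A(x*, T), and FullCent returns the best center. *)

Lemma cauchy_schwarz (R : realDomainType) (I : finType) (a b : I -> R) :
  (\sum_i a i * b i) ^+ 2 <= (\sum_i a i ^+ 2) * (\sum_i b i ^+ 2).
Proof.
have lagrange : \sum_i \sum_j (a i * b j - a j * b i) ^+ 2 =
    \sum_i \sum_j a i ^+ 2 * b j ^+ 2 + \sum_i \sum_j a j ^+ 2 * b i ^+ 2
    - 2 * \sum_i \sum_j (a i * b i) * (a j * b j).
  rewrite mulr_sumr -big_split -sumrB /=; apply: eq_bigr => i _.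
  rewrite mulr_sumr -big_split -sumrB /=; apply: eq_bigr => j _; ring.
have sum_ab2 :
    \sum_i \sum_j (a i * b i) * (a j * b j) = (\sum_i a i * b i) ^+ 2.
  by rewrite expr2 mulr_suml; apply: eq_bigr => i _; rewrite mulr_sumr.
have sum_a2b2 :
    \sum_i \sum_j a i ^+ 2 * b j ^+ 2 = (\sum_i a i ^+ 2) * (\sum_i b i ^+ 2).
  by rewrite mulr_suml; apply: eq_bigr => i _; rewrite mulr_sumr.
have sum_b2a2 :
    \sum_i \sum_j a j ^+ 2 * b i ^+ 2 = (\sum_i a i ^+ 2) * (\sum_i b i ^+ 2).
  by rewrite exchange_big.
have : 0 <= \sum_i \sum_j (a i * b j - a j * b i) ^+ 2.
  by apply: sumr_ge0 => i _; apply: sumr_ge0 => j _; apply: sqr_ge0.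
rewrite lagrange sum_ab2 sum_a2b2 sum_b2a2; lra.
Qed.

Lemma minkowski_sum_sqr (R : rcfType) (I : finType) (a b : I -> R) :
  Num.sqrt (\sum_i (a i + b i) ^+ 2) <=
  Num.sqrt (\sum_i a i ^+ 2) + Num.sqrt (\sum_i b i ^+ 2).
Proof.
have sa_ge0 : 0 <= \sum_i a i ^+ 2 by apply: sumr_ge0 => i _; apply: sqr_ge0.
have sb_ge0 : 0 <= \sum_i b i ^+ 2 by apply: sumr_ge0 => i _; apply: sqr_ge0.
have expand : \sum_i (a i + b i) ^+ 2 =
    \sum_i a i ^+ 2 + \sum_i b i ^+ 2 + 2 * \sum_i a i * b i.
  by rewrite mulr_sumr -!big_split /=; apply: eq_bigr => i _; ring.
have cs :
    \sum_i a i * b i <= Num.sqrt (\sum_i a i ^+ 2) * Num.sqrt (\sum_i b i ^+ 2).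
  rewrite -sqrtrM // (le_trans (ler_norm _)) // -sqrtr_sqr ler_wsqrtr //.
  exact: cauchy_schwarz.
rewrite -[leRHS]ger0_norm ?addr_ge0 ?sqrtr_ge0 // -sqrtr_sqr ler_wsqrtr //.
rewrite expand sqrrD !sqr_sqrtr //; lra.
Qed.

Section Euclidean.
Variables (R : realType) (d : nat).
Implicit Types u v w : 'rV[R]_d.

Lemma edist_ge0 u v : 0 <= edist u v.
Proof. exact: sqrtr_ge0. Qed.

Lemma edistC u v : edist u v = edist v u.
Proof.
by rewrite /edist; congr Num.sqrt; apply: eq_bigr => l _; rewrite -sqrrN opprB.
Qed.

Lemma edistxx u : edist u u = 0.
Proof. by rewrite /edist big1 ?sqrtr0 // => l _; rewrite subrr expr0n. Qed.

Lemma edist_triangle u v w : edist u w <= edist u v + edist v w.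
Proof.
rewrite /edist (eq_bigr (fun l => (u 0 l - v 0 l + (v 0 l - w 0 l)) ^+ 2)).
  exact: minkowski_sum_sqr.
by move=> l _; rewrite addrA subrK.
Qed.

End Euclidean.

Section Centers.
Variables (R : realType) (d n : nat) (x : 'I_n -> 'rV[R]_d).
Local Open Scope ereal_scope.

Lemma dist_to_le (C : seq 'I_n) y c : c \in C ->
  dist_to x C y <= (edist (x y) (x c))%:E.
Proof. by move=> cC; rewrite /dist_to ge_bigmin_seq. Qed.

Lemma dist_to_le_exists (C : seq 'I_n) y r : dist_to x C y <= r%:E ->
  exists2 c, c \in C & (edist (x y) (x c) <= r)%R.
Proof.
elim: C => [|c C IH]; first by rewrite /dist_to big_nil leNgt ltry.
rewrite /dist_to big_cons ge_min => /orP[near_c|/IH[c' c'C near_c']].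
  by exists c; rewrite ?mem_head // -lee_fin.
by exists c'; rewrite // in_cons c'C orbT.
Qed.

Lemma dist_to_subset (C C' : seq 'I_n) y : {subset C <= C'} ->
  dist_to x C' y <= dist_to x C y.
Proof.
move=> sCC'; rewrite [leRHS]/dist_to big_seq.
by apply: le_bigmin => [|c /sCC' cC']; [exact: leey | exact: dist_to_le].
Qed.

Lemma kradius_ge0 (C : {set 'I_n}) : 0 <= kradius x C.
Proof. exact: bigmax_ge_id. Qed.

Lemma kradius_fin_num (C : {set 'I_n}) : C != set0 -> kradius x C \is a fin_num.
Proof.
case/set0Pn=> c cC; rewrite ge0_fin_numE ?kradius_ge0 //.
apply: bigmax_lt => [|y _]; first exact: ltry.
apply: le_lt_trans (ltry (edist (x y) (x c))).
by apply: dist_to_le; rewrite mem_enum.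
Qed.

Lemma kradius_le_cover (C : {set 'I_n}) r : kradius x C <= r%:E ->
  forall p, exists2 c, c \in C & (edist (x p) (x c) <= r)%R.
Proof.
move=> le_r p; have [c] := dist_to_le_exists (le_trans (le_bigmax _ _ p) le_r).
by rewrite mem_enum; exists c.
Qed.

Lemma opt_kradius_attained k : (k <= n)%N ->
  exists2 C : {set 'I_n}, #|C| = k & opt_kradius x k = kradius x C.
Proof.
move=> le_kn; have cardC0 : #|[set widen_ord le_kn i | i : 'I_k]| == k.
  rewrite card_imset ?card_ord // => i j eq_ij.
  by apply: val_inj; exact: (congr1 val eq_ij).
rewrite /opt_kradius (bigmin_eq_arg _ _ _ _ cardC0) => [|C _]; last exact: leey.
by case: arg_minP => // C /eqP cardC _; exists C.
Qed.

Lemma separated_size_le_cover (C : {set 'I_n}) r (s : seq 'I_n) :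
  (forall p, exists2 c, c \in C & (edist (x p) (x c) <= r)%R) -> uniq s ->
  {in s &, forall p q, p != q -> (r + r < edist (x p) (x q))%R} ->
  (size s <= #|C|)%N.
Proof.
move=> cover uniq_s far.
pose center p := odflt p [pick c in C | (edist (x p) (x c) <= r)%R].
have centerP p : center p \in C /\ (edist (x p) (x (center p)) <= r)%R.
  rewrite /center; case: pickP => [c /andP[]//|none].
  by have [c cC near_c] := cover p; have := none c; rewrite cC near_c.
have center_inj : {in s &, injective center}.
  move=> p q ps qs same.
  have close : (edist (x p) (x q) <= r + r)%R.
    have [_ near_p] := centerP p; have [_ near_q] := centerP q.
    have := edist_triangle (x p) (x (center p)) (x q).
    by rewrite [edist (x (center p)) _]edistC same in near_p *; lra.
  by apply/eqP; apply: contraTT close => /(far p q ps qs); rewrite -ltNge.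
rewrite -(size_map center) cardE uniq_leq_size ?map_inj_in_uniq //.
by move=> _ /mapP[p _ ->]; rewrite mem_enum; case: (centerP p).
Qed.

Lemma greedy_ok_uniq (C cs : seq 'I_n) : greedy_ok x C cs ->
  uniq cs /\ {in cs, forall c, c \notin C}.
Proof.
elim: cs C => [|c cs IH] C //= [cC [_ /IH[uniq_cs disj_cs]]].
have c_cs : c \notin cs by apply/negP => /disj_cs; rewrite mem_head.
split; first by rewrite c_cs uniq_cs.
move=> z; rewrite in_cons => /predU1P[-> //|/disj_cs].
by rewrite in_cons negb_or => /andP[].
Qed.

Lemma greedy_ok_separated (C cs : seq 'I_n) y : greedy_ok x C cs ->
  y \notin C -> y \notin cs ->
  {in cs & C ++ cs, forall p q, p != q ->
    dist_to x (catrev cs C) y <= (edist (x p) (x q))%:E}.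
Proof.
elim: cs C => [|c cs IH] C //= [_ [farthest greedy_cs]] yC.
rewrite in_cons negb_or => /andP[yc ycs].
have yC' : y \notin c :: C by rewrite in_cons negb_or yc yC.
move=> p q; rewrite in_cons => /predU1P[->{p}|pcs].
- rewrite mem_cat in_cons orbCA -mem_cat => /predU1P[<-|qCcs cq].
    by rewrite eqxx.
  have [qC|qcs] := boolP (q \in C).
    apply: le_trans (dist_to_subset _ _)
                    (le_trans (farthest y yC) (dist_to_le _ qC)).
    by move=> z zC; rewrite catrevE mem_cat in_cons zC !orbT.
  rewrite edistC; apply: IH; rewrite // 1?eq_sym // ?mem_cat ?mem_head ?orbT //.
  by move: qCcs; rewrite mem_cat (negPf qcs).
- move=> qin; apply: IH => //; move: qin.
  rewrite !mem_cat !in_cons.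
  by case/orP=> [->|/predU1P[->|->]]; rewrite ?orbT ?eqxx.
Qed.

Lemma greedy_kcenter_2approx (cs : seq 'I_n) (C : {set 'I_n}) r y :
  greedy_ok x [::] cs -> #|C| = size cs -> kradius x C <= r%:E ->
  dist_to x (rev cs) y <= (r + r)%:E.
Proof.
move=> greedy cardC le_r; have cover := kradius_le_cover le_r.
have [uniq_cs _] := greedy_ok_uniq greedy.
have r_ge0 : (0 <= r)%R.
  by have [c _ near_c] := cover y; apply: le_trans near_c; apply: edist_ge0.
have [ycs|ycs] := boolP (y \in cs).
  rewrite (le_trans (dist_to_le y (_ : y \in rev cs))) ?mem_rev //.
  by rewrite edistxx lee_fin addr_ge0.
rewrite leNgt; apply/negP => far_y.
have sep := greedy_ok_separated greedy (negbT (in_nil y)) ycs.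
rewrite catrevE cats0 in sep.
suff : (size (y :: cs) <= #|C|)%N by rewrite cardC ltnn.
apply: separated_size_le_cover cover _ _; first by rewrite /= ycs.
have far_from_y p : p \in cs -> (r + r < edist (x y) (x p))%R.
  by move=> pcs; rewrite -lte_fin (lt_le_trans far_y) // dist_to_le ?mem_rev.
have far_in_cs : {in cs &, forall p q, p != q -> (r + r < edist (x p) (x q))%R}.
  by move=> p q pcs qcs pq; rewrite -lte_fin (lt_le_trans far_y) ?sep.
move=> p q; rewrite !in_cons => /predU1P[->|pcs] /predU1P[->|qcs] pq.
- by rewrite eqxx in pq.
- exact: far_from_y.
- by rewrite edistC far_from_y.
- exact: far_in_cs.
Qed.

End Centers.

Lemma smooth_A_le (R : realType) (d n : nat) (x : 'I_n -> 'rV[R]_d) T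
    (A : 'rV[R]_d -> nat -> R) eps i j b :
  smooth_A x T A eps -> (0 < b <= T)%N -> 0 <= A (x i) b -> 0 <= A (x j) b ->
  (1 - eps * edist (x i) (x j)) * A (x j) b <= A (x i) b.
Proof.
move=> smoothA /andP[b_gt0 le_bT] Ai_ge0 Aj_ge0.
have ltT : (b.-1 < T)%N by rewrite prednK.
have := le_trans (smoothA i j) (bigmin_le _ (Ordinal ltT) _).
rewrite /uvp_ratio /= prednK //; have [->|Aj_neq0] := eqVneq (A (x j) b) 0.
  by rewrite mulr0.
by rewrite lee_fin ler_pdivlMr // lt_def Aj_neq0.
Qed.

Theorem theorem4 (R : realType) (d n : nat) (x : 'I_n -> 'rV[R]_d)
  (T B : nat) (A : 'rV[R]_d -> nat -> R) (eps : R) :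
  injective x ->
  (1 <= T)%N ->
  (1 <= B %/ T)%N -> (B %/ T <= n)%N ->
  (forall v b, (1 <= b)%N -> (b <= T)%N -> 0 <= A v b <= 1) ->
  monotone_A T A ->
  0 < eps ->
  smooth_A x T A eps ->
  forall xhat : 'I_n, fullcent_output x A B T xhat ->
  forall xstar : 'I_n, (forall i : 'I_n, A (x i) T <= A (x xstar) T) ->
  A (x xhat) T >= (1 - 2 * eps * fine (opt_kradius x (B %/ T))) * A (x xstar) T.
Proof.
move=> _ T_gt0 k_gt0 le_kn A_range _ eps_gt0 smoothA xhat.
move=> [cs [[size_cs greedy] [_ xhat_best]]] xstar _.
have [C cardC optC] := opt_kradius_attained x le_kn.
have C_neq0 : C != set0 by rewrite -card_gt0 cardC.
set r := fine _.
have le_r : (kradius x C <= r%:E)%E by rewrite /r optC fineK ?kradius_fin_num.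
have := greedy_kcenter_2approx xstar greedy (etrans cardC (esym size_cs)) le_r.
case/dist_to_le_exists => c; rewrite mem_rev => c_cs near_c.
have A_ge0 v : 0 <= A v T by have /andP[] := A_range v T T_gt0 (leqnn T).
have T_range : (0 < T <= T)%N by rewrite T_gt0 leqnn.
have := smooth_A_le smoothA T_range (A_ge0 (x c)) (A_ge0 (x xstar)).
rewrite edistC => smooth_c.
apply: le_trans (le_trans smooth_c (xhat_best c c_cs)).
by apply: ler_wpM2r; rewrite ?A_ge0 //; nra.
Qed.
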